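(* Let $\mathcal{S}=\{A_1,\dots,A_p\}\subseteq M_m$ ($p\ge1$), let $\langle\mathcal{S}\rangle_0$ be the unital subalgebra of $M_m$ generated by the $A_i$ and $\langle\mathcal{S}\rangle_1$ the (not necessarily unital) subalgebra generated by the $A_i$. Let $\tau(X)=\sum_{i=1}^pA_i^*XA_i$ on $M_m$. Let $(a_n)_{n\ge0}$ be strictly positive scalars such that $\sum_{n\ge0}a_n\tau^n$ converges in norm, and put $\sigma_0=\sum_{n=0}^\infty a_n\tau^n$, $\sigma_1=\sum_{n=1}^\infty a_n\tau^n$ (with $\tau^0$ the identity map). Then for $j=0,1$ the coefficient space of $\sigma_j$ equals $\langle\mathcal{S}\rangle_j$. Consequently, $\dim\langle\mathcal{S}\rangle_j$ equals the Choi rank of $\sigma_j$, and $A\in\langle\mathcal{S}\rangle_j$ if and only if there exists a scalar $q>0$ such that $\sigma_j-q\alpha_A$ is completely positive.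
   Context: Every completely positive (CP) map $\sigma$ on $M_m$ has a Choi-Kraus decomposition $\sigma(X)=\sum_{k=1}^rC_k^*XC_k$; the span of the $C_k$ does not depend on the decomposition and is called the (Choi-Kraus) coefficient space $\mathcal{M}_\sigma$ of $\sigma$; its dimension is the Choi rank of $\sigma$. For $A\in M_m$, $\alpha_A(X)=A^*XA$. *)

From HB Require Import structures.
From mathcomp Require Import all_boot all_order all_algebra all_field.
From mathcomp Require Import complex.
From mathcomp Require Import reals.
Set Implicit Arguments.
Unset Strict Implicit.
Unset Printing Implicit Defensive.
Import Order.TTheory GRing.Theory Num.Theory.
Local Open Scope ring_scope.

Section Defs.
Variable R : realType.
Local Notation C := (R[i]).

Definition adj {p q : nat} (A : 'M[C]_(p, q)) : 'M[C]_(q, p) :=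
  (map_mx (fun z : C => Num.conj z) A)^T.

Definition alpha {m : nat} (A : 'M[C]_m) (X : 'M[C]_m) : 'M[C]_m :=
  adj A *m X *m A.

(* The k x k block matrix [X a b] (blocks in M_m) is positive semidefinite:
   w^* [X] w >= 0 for every vector w = (v_0, ..., v_{k-1}) in C^{km}. *)
Definition psd_block {m k : nat} (X : 'I_k -> 'I_k -> 'M[C]_m) : Prop :=
  forall v : 'I_k -> 'cV[C]_m,
    0 <= \sum_(a < k) \sum_(b < k) (adj (v a) *m X a b *m v b) 0 0.

Definition completely_positive {m : nat} (sigma : 'M[C]_m -> 'M[C]_m) : Prop :=
  forall (k : nat) (X : 'I_k -> 'I_k -> 'M[C]_m),
    psd_block X -> psd_block (fun a b => sigma (X a b)).

Definition is_kraus {m r : nat} (sigma : 'M[C]_m -> 'M[C]_m)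
  (Cs : 'I_r -> 'M[C]_m) : Prop :=
  forall X, sigma X = \sum_(k < r) adj (Cs k) *m X *m Cs k.

Definition fspan {m r : nat} (Cs : 'I_r -> 'M[C]_m) : {vspace 'M[C]_m} :=
  (<< [seq Cs k | k <- enum 'I_r] >>)%VS.

Definition mx_cvg_to {p q : nat} (u : nat -> 'M[C]_(p, q)) (L : 'M[C]_(p, q))
  : Prop :=
  forall eps : C, 0 < eps -> exists N : nat, forall n : nat, (N <= n)%N ->
    forall i j, `|u n i j - L i j| < eps.

Definition gen_alg0 {m : nat} (U : {vspace 'M[C]_m.+1}) : {vspace 'M[C]_m.+1} :=
  agenv U.

(* Non-unital subalgebra generated by U: U + U^2 + ... (same truncation as
   the library's agenv, which suffices by dimension). *)
Definition gen_alg1 {m : nat} (U : {vspace 'M[C]_m.+1}) : {vspace 'M[C]_m.+1} :=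
  (\sum_(i < \dim {: 'M[C]_m.+1}) U ^+ i.+1)%VS.

(* The conclusions of the theorem for a CP map sigma and a space V:
   (1) the Choi-Kraus coefficient space of sigma is V (sigma has a Choi-Kraus
       decomposition, and every such decomposition spans V);
   (2) the Choi rank of sigma equals dim V;
   (3) A \in V iff sigma - q alpha_A is CP for some scalar q > 0. *)
Definition theorem_conclusion {m : nat} (sigma : 'M[C]_m.+1 -> 'M[C]_m.+1)
  (V : {vspace 'M[C]_m.+1}) : Prop :=
  [/\ (exists (r : nat) (Cs : 'I_r -> 'M[C]_m.+1), is_kraus sigma Cs)
    , (forall (r : nat) (Cs : 'I_r -> 'M[C]_m.+1),
          is_kraus sigma Cs -> fspan Cs = V)
    , (forall (r : nat) (Cs : 'I_r -> 'M[C]_m.+1),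
          is_kraus sigma Cs -> \dim (fspan Cs) = \dim V)
    & (forall A : 'M[C]_m.+1, A \in V <->
          exists q : C, 0 < q /\
            completely_positive (fun X => sigma X - q *: alpha A X))].

End Defs.

(* The Choi matrix of a map F on M_n is the block matrix [F (E_ac)]_(a,c).
   Evaluated at the vector made of the rows of w it gives [choi_form F w],
   which for a Kraus map X |-> sum_C C^* X C equals sum_C |<w, C>|^2, where
   <w, C> = sum_ab w_ab C_ab.  Hence the annihilator of the span of any Kraus
   family of F is the zero set of [choi_form F], so all Kraus families span
   the same space; if F - q alpha_A is CP then [choi_form F w >= q |<w, A>|^2]
   forces A into that span, and conversely for A = sum_i lam_i C_i a
   parallelogram bound shows that F - q alpha_A is CP for small q.
   The partial sums of sum_n a_n tau^n are Kraus maps whose coefficients are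
   the words of length n in the A_l, with positive weights, so in the limit
   [choi_form sigma w] vanishes iff w annihilates all words (of positive
   length for sigma_1), i.e. the generated algebra.  A Kraus family of the
   limit exists by Choi's theorem: sigma is linear with a positive
   semidefinite Choi matrix, whose spectral decomposition gives the
   coefficients. *)

From HB Require Import structures.
From mathcomp Require Import all_boot all_order all_algebra all_field.
From mathcomp Require Import complex.
From mathcomp Require Import reals.
From mathcomp Require Import ring.
Import Order.TTheory GRing.Theory Num.Theory.
Local Open Scope ring_scope.

Set Implicit Arguments.
Unset Strict Implicit.
Unset Printing Implicit Defensive.

Section SeqConvergence.
Variable K : numFieldType.
Implicit Types (u v : nat -> K) (c l : K).

Definition seq_cvg_to u l := forall eps, 0 < eps ->
  exists N, forall n, (N <= n)%N -> `|u n - l| < eps.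

Lemma eq_seq_cvg_to u v l : u =1 v -> seq_cvg_to u l -> seq_cvg_to v l.
Proof. by move=> uv cu e /cu [N HN]; exists N => n /HN; rewrite uv. Qed.

Lemma seq_cvg_to_cst c : seq_cvg_to (fun=> c) c.
Proof. by move=> e e0; exists 0%N => n _; rewrite subrr normr0. Qed.

Lemma seq_cvg_toD u v l k :
  seq_cvg_to u l -> seq_cvg_to v k -> seq_cvg_to (fun n => u n + v n) (l + k).
Proof.
move=> cu cv e e0; have e2 : 0 < e / 2 by rewrite divr_gt0 ?ltr0n.
have [N1 H1] := cu _ e2; have [N2 H2] := cv _ e2.
exists (maxn N1 N2) => n; rewrite geq_max => /andP [n1 n2].
rewrite opprD addrACA; apply: le_lt_trans (ler_normD _ _) _.
by rewrite [e]splitr ltrD ?H1 ?H2.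
Qed.

Lemma seq_cvg_toMl c u l :
  seq_cvg_to u l -> seq_cvg_to (fun n => c * u n) (c * l).
Proof.
move=> cu e e0; have c1 : 0 < `|c| + 1 by rewrite ltr_wpDl.
have [N HN] := cu (e / (`|c| + 1)) (divr_gt0 e0 c1).
exists N => n /HN h; rewrite -mulrBr normrM.
apply: le_lt_trans (_ : _ <= (`|c| + 1) * `|u n - l|) _.
  by rewrite ler_wpM2r // lerDl.
by rewrite mulrC -ltr_pdivlMr.
Qed.

Lemma seq_cvg_to_sum I (s : seq I) (P : pred I) (u : I -> nat -> K) (l : I -> K) :
  (forall i, P i -> seq_cvg_to (u i) (l i)) ->
  seq_cvg_to (fun n => \sum_(i <- s | P i) u i n) (\sum_(i <- s | P i) l i).
Proof.
move=> cu; elim: s => [|x s IH].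
  by rewrite big_nil; apply: eq_seq_cvg_to (seq_cvg_to_cst 0) => n; rewrite big_nil.
rewrite big_cons; case Px: (P x); last first.
  by apply: eq_seq_cvg_to IH => n; rewrite big_cons Px.
apply: eq_seq_cvg_to (seq_cvg_toD (cu x Px) IH) => n.
by rewrite big_cons Px.
Qed.

Lemma seq_cvg_to_unique u l k : seq_cvg_to u l -> seq_cvg_to u k -> l = k.
Proof.
move=> cl ck; apply/eqP; rewrite -subr_eq0; apply/contraT => nlk.
have d0 : 0 < `|l - k| / 2 by rewrite divr_gt0 ?normr_gt0 ?ltr0n.
have [N1 H1] := cl _ d0; have [N2 H2] := ck _ d0.
have h1 := H1 _ (leq_maxl N1 N2); have h2 := H2 _ (leq_maxr N1 N2).
have := ler_distD (u (maxn N1 N2)) l k; rewrite (distrC l (u _)).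
by move/le_lt_trans => /(_ _ (ltrD h1 h2)); rewrite -splitr ltxx.
Qed.

(* In a numFieldType [0 <= l] means [l = `|l|], whence the distance to [`|l|]. *)
Lemma seq_cvg_to_ge0 u l N0 :
  (forall n, (N0 <= n)%N -> 0 <= u n) -> seq_cvg_to u l -> 0 <= l.
Proof.
move=> u0 cl; suff -> : l = `|l| by [].
apply/eqP; rewrite -subr_eq0; apply/contraT => nl.
have d0 : 0 < `|l - (`|l|)| / 2 by rewrite divr_gt0 ?normr_gt0 ?ltr0n.
have [N H] := cl _ d0; set n := maxn N N0.
have h1 := H n (leq_maxl _ _).
have h2 : `|u n - (`|l|)| < `|l - (`|l|)| / 2.
  rewrite -(ger0_norm (u0 n (leq_maxr _ _))).
  exact: le_lt_trans (ler_dist_dist _ _) h1.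
have := ler_distD (u n) l `|l|; rewrite (distrC l (u _)).
by move/le_lt_trans => /(_ _ (ltrD h1 h2)); rewrite -splitr ltxx.
Qed.

Lemma seq_cvg_to_ge c u l N0 :
  (forall n, (N0 <= n)%N -> c <= u n) -> seq_cvg_to u l -> c <= l.
Proof.
move=> cu ul; rewrite -subr_ge0.
apply: (seq_cvg_to_ge0 (u := fun n => u n - c) (N0 := N0)).
  by move=> n /cu; rewrite subr_ge0.
exact: seq_cvg_toD ul (seq_cvg_to_cst _).
Qed.

End SeqConvergence.

Section MatrixConvergence.
Variables (R : realType) (p q : nat).
Local Notation C := R[i].
Implicit Types (u v : nat -> 'M[C]_(p, q)) (L : 'M[C]_(p, q)).

Lemma mx_cvg_to_entry u L i j :
  mx_cvg_to u L -> seq_cvg_to (fun N => u N i j) (L i j).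
Proof. by move=> cu e /cu [N HN]; exists N => k /HN; apply. Qed.

Lemma eq_mx_cvg_to u v L : u =1 v -> mx_cvg_to u L -> mx_cvg_to v L.
Proof. by move=> uv cu e /cu [N HN]; exists N => k /HN; rewrite uv. Qed.

Lemma mx_cvg_to_shift u L : mx_cvg_to u L -> mx_cvg_to (fun N => u N.+1) L.
Proof. by move=> cu e /cu [N HN]; exists N => k kN; apply/HN/leqW. Qed.

End MatrixConvergence.

Section Adjoint.
Variable R : realType.
Local Notation C := R[i].

Lemma adjmxE p q (A : 'M[C]_(p, q)) i j : adj A i j = (A j i)^*.
Proof. by rewrite /adj !mxE. Qed.

Lemma adjmxD p q (A B : 'M[C]_(p, q)) : adj (A + B) = adj A + adj B.
Proof. by apply/matrixP => i j; rewrite !adjmxE !mxE rmorphD. Qed.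

Lemma adjmxZ p q c (A : 'M[C]_(p, q)) : adj (c *: A) = c^* *: adj A.
Proof. by apply/matrixP => i j; rewrite !adjmxE !mxE rmorphM. Qed.

Lemma adjmxM p q r (A : 'M[C]_(p, q)) (B : 'M[C]_(q, r)) :
  adj (A *m B) = adj B *m adj A.
Proof.
apply/matrixP => i j; rewrite adjmxE !mxE rmorph_sum.
by apply: eq_bigr => k _; rewrite !adjmxE rmorphM mulrC.
Qed.

Lemma adjmxK p q (A : 'M[C]_(p, q)) : adj (adj A) = A.
Proof. by apply/matrixP => i j; rewrite !adjmxE conjCK. Qed.

Lemma adjmx1 n : adj (1%:M : 'M[C]_n) = 1%:M.
Proof. by apply/matrixP => i j; rewrite adjmxE !mxE eq_sym rmorph_nat. Qed.

Lemma mx_formE p q (u : 'cV[C]_p) (Y : 'M[C]_(p, q)) (v : 'cV[C]_q) :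
  (adj u *m Y *m v) 0 0 = \sum_b \sum_d (u b 0)^* * Y b d * v d 0.
Proof.
rewrite mxE exchange_big; apply: eq_bigr => d _.
by rewrite mxE mulr_suml; apply: eq_bigr => b _; rewrite adjmxE.
Qed.

Lemma mx_form_delta p q (Y : 'M[C]_(p, q)) i j :
  (adj (delta_mx i 0 : 'cV_p) *m Y *m (delta_mx j 0 : 'cV_q)) 0 0 = Y i j.
Proof.
rewrite mx_formE (bigD1 i) //= (bigD1 j) //= !mxE !eqxx /= conjC1 mul1r mulr1.
rewrite !big1 ?addr0 // => [b /negPf nbi|d /negPf ndj].
  by rewrite big1 // => d _; rewrite !mxE nbi conjC0 !mul0r.
by rewrite !mxE ndj mulr0.
Qed.

(* Polarization with the vectors [e_i + e_j] and [e_i + 'i e_j]. *)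
Lemma psd_hermsymmx N (J : 'M[C]_N) :
  (forall y : 'cV_N, 0 <= (adj y *m J *m y) 0 0) -> J \is hermsymmx.
Proof.
move=> psdJ; rewrite qualifE /= expr0 scale1r; apply/eqP/matrixP => i j.
rewrite !mxE.
pose e x : 'cV[C]_N := delta_mx x 0.
have formE c : (adj (e i + c *: e j) *m J *m (e i + c *: e j)) 0 0 =
    J i i + c * J i j + c^* * J j i + c^* * c * J j j.
  rewrite adjmxD adjmxZ !mulmxDl !mulmxDr -!scalemxAl -!scalemxAr.
  by rewrite !(mx_form_delta, mxE); ring.
have real_diag x : (J x x)^* = J x x.
  by rewrite -(mx_form_delta J) conj_Creal // ger0_real.
have conj_eq c : c^* * (J i j)^* + c * (J j i)^* = c * J i j + c^* * J j i.
  have := conj_Creal (ger0_real (psdJ (e i + c *: e j))).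
  rewrite formE !rmorphD !rmorphM /= conjCK !real_diag => h.
  apply: (addrI (J i i)); apply: (addIr (c^* * c * J j j)).
  by rewrite !addrA -h [c * c^*]mulrC.
have E1 := conj_eq 1; rewrite conjC1 !mul1r in E1.
have E2 : (J j i)^* - (J i j)^* = J i j - J j i.
  apply: (mulfI (@neq0Ci _)); have := conj_eq 'i; rewrite conjCi.
  by rewrite !mulNr !mulrBr addrC.
have -> : (J j i)^* = ((J i j)^* + (J j i)^* + ((J j i)^* - (J i j)^*)) / 2.
  by field.
by rewrite E1 E2; field.
Qed.

End Adjoint.

Section BlockForm.
Variables (R : realType) (n k : nat).
Local Notation C := R[i].
Local Notation M := 'M[C]_n.
Implicit Types (X Y : 'I_k -> 'I_k -> M) (u v : 'I_k -> 'cV[C]_n).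

Definition block_form X u v : C :=
  \sum_a \sum_b (adj (u a) *m X a b *m v b) 0 0.

Lemma eq_block_form X Y u v :
  (forall a b, X a b = Y a b) -> block_form X u v = block_form Y u v.
Proof. by move=> XY; apply: eq_bigr => a _; apply: eq_bigr => b _; rewrite XY. Qed.

Lemma eq_block_form_vec X u1 u2 v1 v2 :
  u1 =1 u2 -> v1 =1 v2 -> block_form X u1 v1 = block_form X u2 v2.
Proof.
by move=> u12 v12; apply: eq_bigr => a _; apply: eq_bigr => b _; rewrite u12 v12.
Qed.

Lemma block_form_sum I (s : seq I) (P : pred I) (F : I -> 'I_k -> 'I_k -> M) u v :
  block_form (fun a b => \sum_(i <- s | P i) F i a b) u v =
  \sum_(i <- s | P i) block_form (F i) u v.
Proof.
rewrite [RHS]exchange_big; apply: eq_bigr => a _; rewrite [RHS]exchange_big.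
by apply: eq_bigr => b _; rewrite mulmx_sumr mulmx_suml summxE.
Qed.

Lemma block_formZ c X u v :
  block_form (fun a b => c *: X a b) u v = c * block_form X u v.
Proof.
rewrite mulr_sumr; apply: eq_bigr => a _; rewrite mulr_sumr.
by apply: eq_bigr => b _; rewrite -scalemxAr -scalemxAl mxE.
Qed.

Lemma block_formB X Y u v :
  block_form (fun a b => X a b - Y a b) u v = block_form X u v - block_form Y u v.
Proof.
rewrite /block_form -sumrB; apply: eq_bigr => a _.
by rewrite -sumrB; apply: eq_bigr => b _; rewrite mulmxBr mulmxBl mxE [X in _ + X]mxE.
Qed.

Lemma block_formDl X u1 u2 v :
  block_form X (fun a => u1 a + u2 a) v = block_form X u1 v + block_form X u2 v.
Proof.
rewrite /block_form -big_split; apply: eq_bigr => a _; rewrite -big_split.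
by apply: eq_bigr => b _; rewrite adjmxD !mulmxDl mxE.
Qed.

Lemma block_formDr X u v1 v2 :
  block_form X u (fun a => v1 a + v2 a) = block_form X u v1 + block_form X u v2.
Proof.
rewrite /block_form -big_split; apply: eq_bigr => a _; rewrite -big_split.
by apply: eq_bigr => b _; rewrite mulmxDr mxE.
Qed.

Lemma block_formZl c X u v :
  block_form X (fun a => c *: u a) v = c^* * block_form X u v.
Proof.
rewrite mulr_sumr; apply: eq_bigr => a _; rewrite mulr_sumr.
by apply: eq_bigr => b _; rewrite adjmxZ -!scalemxAl mxE.
Qed.

Lemma block_formZr c X u v :
  block_form X u (fun a => c *: v a) = c * block_form X u v.
Proof.
rewrite mulr_sumr; apply: eq_bigr => a _; rewrite mulr_sumr.
by apply: eq_bigr => b _; rewrite -!scalemxAr mxE.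
Qed.

Lemma block_form_parallelogram X u1 u2 :
  block_form X (fun a => u1 a + u2 a) (fun a => u1 a + u2 a) +
  block_form X (fun a => u1 a + (-1) *: u2 a) (fun a => u1 a + (-1) *: u2 a) =
  2 * block_form X u1 u1 + 2 * block_form X u2 u2.
Proof.
rewrite !block_formDl !block_formDr !block_formZl !block_formZr conjCN1; ring.
Qed.

Lemma block_form_alpha (K : M) X u v :
  block_form (fun a b => alpha K (X a b)) u v =
  block_form X (fun a => K *m u a) (fun a => K *m v a).
Proof.
by apply: eq_bigr => a _; apply: eq_bigr => b _; rewrite /alpha adjmxM !mulmxA.
Qed.

End BlockForm.

Section CompletelyPositive.
Variables (R : realType) (n : nat).
Local Notation C := R[i].
Local Notation M := 'M[C]_n.

Lemma block_form_units (u v : 'I_n -> 'cV[C]_n) :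
  block_form (fun a c => delta_mx a c : M) u v =
  (\sum_a u a a 0)^* * \sum_c v c c 0.
Proof.
rewrite rmorph_sum mulr_suml; apply: eq_bigr => a _.
rewrite mulr_sumr; apply: eq_bigr => c _.
rewrite -(mul_delta_mx (0 : 'I_1)) mulmxA -[_ *m _ *m v c]mulmxA -colE -rowE.
by rewrite mxE big_ord1 !mxE.
Qed.

Lemma psd_block_units : psd_block (fun a c : 'I_n => delta_mx a c : M).
Proof.
by move=> v; rewrite -/(block_form _ v v) block_form_units mulrC mul_conjC_ge0.
Qed.

Lemma alpha_cp (K : M) : completely_positive (alpha K).
Proof.
move=> k X psdX v; rewrite -/(block_form _ v v) block_form_alpha.
exact: psdX.
Qed.

Lemma cp_sum I (s : seq I) (F : I -> M -> M) :
  (forall i, completely_positive (F i)) ->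
  completely_positive (fun X => \sum_(i <- s) F i X).
Proof.
move=> cpF k X psdX v; rewrite -/(block_form _ v v) block_form_sum.
by apply: sumr_ge0 => i _; exact: cpF.
Qed.

Lemma cp_scale c (F : M -> M) :
  0 <= c -> completely_positive F -> completely_positive (fun X => c *: F X).
Proof.
move=> c0 cpF k X psdX v; rewrite -/(block_form _ v v) block_formZ.
by rewrite mulr_ge0 //; exact: cpF.
Qed.

Definition kraus_map (s : seq M) (X : M) : M := \sum_(K <- s) alpha K X.

Lemma kraus_map_cp s : completely_positive (kraus_map s).
Proof. exact: cp_sum alpha_cp. Qed.

Lemma kraus_map_linear s : linear (kraus_map s).
Proof.
move=> c X Y; rewrite /kraus_map scaler_sumr -big_split.
by apply: eq_bigr => K _; rewrite /alpha mulmxDr mulmxDl -scalemxAr -scalemxAl.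
Qed.

Definition choi_block (F : M -> M) (a c : 'I_n) : M := F (delta_mx a c).

Lemma cp_psd_choi F : completely_positive F -> psd_block (choi_block F).
Proof. by move=> cpF; exact: cpF psd_block_units. Qed.

Definition mxpair (w x : M) : C := \sum_a \sum_b w a b * x a b.

Definition choi_form (F : M -> M) (w : M) : C :=
  block_form (choi_block F) (fun a => (row a w)^T) (fun a => (row a w)^T).

Lemma eq_choi_form F G w : F =1 G -> choi_form F w = choi_form G w.
Proof. by move=> FG; apply: eq_block_form => a c; rewrite /choi_block FG. Qed.

Lemma choi_form_ge0 F w : completely_positive F -> 0 <= choi_form F w.
Proof. by move=> cpF; exact: cp_psd_choi. Qed.

Lemma choi_form_alpha K w : choi_form (alpha K) w = `|mxpair w K| ^+ 2.
Proof.
rewrite /choi_form /choi_block (block_form_alpha K (fun a c => delta_mx a c)).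
rewrite block_form_units normCKC /mxpair; congr (_^* * _);
  by apply: eq_bigr => a _; rewrite !mxE; apply: eq_bigr => b _; rewrite !mxE mulrC.
Qed.

Lemma sum_sqr_norm_eq0 (I : eqType) (s : seq I) (f : I -> C) :
  \sum_(i <- s) `|f i| ^+ 2 = 0 <-> {in s, forall i, f i = 0}.
Proof.
split=> [/eqP | f0]; last first.
  by rewrite big_seq big1 // => i /f0 ->; rewrite normr0 expr2 mulr0.
rewrite psumr_eq0 => [/allP f0 i /f0|i _]; last exact: exprn_ge0.
by rewrite sqrf_eq0 normr_eq0 => /eqP.
Qed.

Lemma choi_form_kraus s w :
  choi_form (kraus_map s) w = \sum_(K <- s) `|mxpair w K| ^+ 2.
Proof.
rewrite /choi_form /choi_block /kraus_map block_form_sum.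
by apply: eq_bigr => K _; exact: choi_form_alpha.
Qed.

End CompletelyPositive.

Section FlatBlock.
Variables (R : realType) (n k : nat).
Local Notation C := R[i].
Local Notation T := ('I_k * 'I_n)%type.
Local Notation N := #|{: T}|.
Local Notation rk := (@enum_rank T).
Local Notation ev := (@enum_val T (pred_of_argType T)).

Definition flat_block (X : 'I_k -> 'I_k -> 'M[C]_n) : 'M[C]_N :=
  \matrix_(i, j) X (ev i).1 (ev j).1 (ev i).2 (ev j).2.

Lemma flat_blockE X a b c d : flat_block X (rk (a, b)) (rk (c, d)) = X a c b d.
Proof. by rewrite mxE !enum_rankK. Qed.

Lemma sum_enum_rank (G : 'I_N -> C) :
  \sum_i G i = \sum_a \sum_b G (rk (a, b)).
Proof.
rewrite pair_bigA /= (reindex rk) /=; last exact/onW_bij/enum_rank_bij.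
by apply: eq_bigr => -[a b].
Qed.

Lemma flat_block_psd X : psd_block X ->
  forall y : 'cV_N, 0 <= (adj y *m flat_block X *m y) 0 0.
Proof.
move=> psdX y; have := psdX (fun a => \col_b y (rk (a, b)) 0); congr (_ <= _).
rewrite mx_formE sum_enum_rank; apply: eq_bigr => a _.
under eq_bigr do rewrite mx_formE.
rewrite exchange_big; apply: eq_bigr => b _; rewrite sum_enum_rank.
by apply: eq_bigr => c _; apply: eq_bigr => d _; rewrite flat_blockE !mxE.
Qed.

End FlatBlock.

Section Choi.
Variables (R : realType) (n : nat).
Local Notation C := R[i].
Local Notation M := 'M[C]_n.
Local Notation T := ('I_n * 'I_n)%type.
Local Notation N := #|{: T}|.
Local Notation rk := (@enum_rank T).

Lemma linear_deltaE (F : M -> M) : linear F ->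
  forall X, F X = \sum_a \sum_c X a c *: F (delta_mx a c).
Proof.
move=> linF X; have [FZ FD] := GRing.semilinear_linear linF.
have F0 : F 0 = 0 by rewrite -[in F _](scale0r 0) FZ /= scale0r.
rewrite {1}(matrix_sum_delta X) (big_morph F FD F0); apply: eq_bigr => a _.
by rewrite (big_morph F FD F0); apply: eq_bigr => c _; rewrite FZ.
Qed.

Lemma eq_linear_delta (F G : M -> M) : linear F -> linear G ->
  (forall a c, F (delta_mx a c) = G (delta_mx a c)) -> F =1 G.
Proof.
move=> linF linG FG X; rewrite linear_deltaE // [RHS]linear_deltaE //.
by apply: eq_bigr => a _; apply: eq_bigr => c _; rewrite FG.
Qed.

Lemma alpha_deltaE (K : M) a c b d :
  alpha K (delta_mx a c) b d = (K a b)^* * K c d.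
Proof.
rewrite /alpha -(mul_delta_mx (0 : 'I_1)) mulmxA -[_ *m _ *m K]mulmxA.
by rewrite -colE -rowE mxE big_ord1 !mxE.
Qed.

Lemma kraus_map_enum r (Cs : 'I_r -> M) X :
  kraus_map [seq Cs i | i <- enum 'I_r] X = \sum_i alpha (Cs i) X.
Proof. by rewrite /kraus_map big_map big_enum. Qed.

Variable F : M -> M.
Hypotheses (linF : linear F) (psdF : psd_block (choi_block F)).

Local Open Scope sesquilinear_scope.
Local Notation J := (flat_block (choi_block F)).
Local Notation P := (spectralmx J).
Local Notation d := (spectral_diag J).

Lemma choi_spectral : J = P^t* *m diag_mx d *m P.
Proof.
have /orthomx_spectralP := hermitian_normalmx (psd_hermsymmx (flat_block_psd psdF)).
by rewrite invmx_unitary ?spectral_unitarymx.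
Qed.

Lemma choi_eigen_ge0 i : 0 <= d 0 i.
Proof.
have -> : d 0 i = (P *m J *m P^t*) i i.
  move: P d (spectral_unitarymx J) choi_spectral => Q D /unitarymxP QU ->.
  by rewrite !mulmxA QU mul1mx -mulmxA QU mulmx1 mxE eqxx.
have := flat_block_psd psdF (adj (row i P)); congr (_ <= _).
rewrite adjmxK -row_mul mxE [RHS]mxE; apply: eq_bigr => j _.
by congr (_ * _); rewrite !mxE.
Qed.

Definition choi_kraus_coef (i : 'I_N) : M :=
  \matrix_(a, b) (sqrtC (d 0 i) * P i (rk (a, b))).

Theorem choi_kraus : is_kraus F choi_kraus_coef.
Proof.
move=> X; rewrite -kraus_map_enum; move: X.
apply: (eq_linear_delta linF (kraus_map_linear _)) => a c.
apply/matrixP => b e.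
rewrite -(flat_blockE (choi_block F)) choi_spectral mul_mx_diag !mxE.
rewrite kraus_map_enum summxE; apply: eq_bigr => i _.
have s0 : 0 <= sqrtC (d 0 i) by rewrite sqrtC_ge0 choi_eigen_ge0.
rewrite alpha_deltaE !mxE rmorphM /= (conj_Creal (ger0_real s0)).
by rewrite mulrACA -expr2 sqrtCK; ring.
Qed.

End Choi.

Section Annihilator.
Variables (R : realType) (n : nat).
Local Notation C := R[i].
Local Notation M := 'M[C]_n.
Implicit Types (w x y : M) (S : {vspace M}).

Lemma mxpairD w x y : mxpair w (x + y) = mxpair w x + mxpair w y.
Proof.
rewrite /mxpair -big_split; apply: eq_bigr => a _; rewrite -big_split.
by apply: eq_bigr => b _; rewrite mxE mulrDr.
Qed.

Lemma mxpairZ w c x : mxpair w (c *: x) = c * mxpair w x.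
Proof.
rewrite /mxpair mulr_sumr; apply: eq_bigr => a _; rewrite mulr_sumr.
by apply: eq_bigr => b _; rewrite mxE mulrCA.
Qed.

Lemma mxpair0 w : mxpair w 0 = 0.
Proof. by rewrite -(scale0r 0) mxpairZ mul0r. Qed.

Lemma ann_sep S x : x \notin S ->
  exists2 w, {in S, forall y, mxpair w y = 0} & mxpair w x != 0.
Proof.
move=> xS; pose f : 'End(M) := (\1 - projv S)%VF.
have fE y : f y = y - projv S y by rewrite add_lfunE opp_lfunE id_lfunE.
have /matrix0Pn [a [b fx]] : f x != 0.
  by rewrite fE subr_eq0; apply: contra xS => /eqP ->; exact: memv_proj.
pose w : M := \matrix_(a', b') f (delta_mx a' b') a b.
have pairE y : mxpair w y = f y a b.
  rewrite {2}(matrix_sum_delta y) linear_sum summxE; apply: eq_bigr => a' _.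
  rewrite linear_sum summxE; apply: eq_bigr => b' _.
  by rewrite linearZ !mxE mulrC.
exists w => [y yS|]; last by rewrite pairE.
by rewrite pairE fE projv_id // subrr mxE.
Qed.

Lemma memv_ann S x :
  x \in S <-> forall w, {in S, forall y, mxpair w y = 0} -> mxpair w x = 0.
Proof.
split=> [xS w wS | xann]; first exact: wS.
apply/contraT => /ann_sep [w /xann ->]; by rewrite eqxx.
Qed.

Lemma eq_vspace_ann S1 S2 :
  (forall w, {in S1, forall y, mxpair w y = 0} <->
             {in S2, forall y, mxpair w y = 0}) ->
  S1 = S2.
Proof.
move=> ann12; apply/vspaceP => x.
by apply/idP/idP => /memv_ann xann; apply/memv_ann => w /ann12; exact: xann.
Qed.

Lemma ann_span (s : seq M) w :
  {in <<s>>%VS, forall y, mxpair w y = 0} <-> {in s, forall y, mxpair w y = 0}.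
Proof.
split=> ann y ys; first exact/ann/memv_span.
rewrite (coord_span (X := in_tuple s) ys).
elim/big_rec: _ => [|i z _ zann]; first exact: mxpair0.
by rewrite mxpairD mxpairZ zann ann ?mem_nth // mulr0 addr0.
Qed.

Lemma ann_sumv I (r : seq I) (P : pred I) (Vs : I -> {vspace M}) w :
  (forall i, P i -> {in Vs i, forall y, mxpair w y = 0}) ->
  {in (\sum_(i <- r | P i) Vs i)%VS, forall y, mxpair w y = 0}.
Proof.
move=> ann; elim/big_rec: _ => [|i U Pi annU] y.
  by rewrite memv0 => /eqP ->; exact: mxpair0.
by case/memv_addP => [y1 y1V [y2 y2U ->]]; rewrite mxpairD (ann i) // annU ?addr0.
Qed.

End Annihilator.

Section PsdBound.
Variables (R : realType) (n k : nat) (X : 'I_k -> 'I_k -> 'M[R[i]]_n).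
Hypothesis psdX : psd_block X.
Local Notation Q u := (block_form X u u).

Lemma block_form_sum_le r (z : 'I_r -> 'I_k -> 'cV[R[i]]_n) :
  Q (fun a => \sum_i z i a) <= 2 ^+ r * \sum_i Q (z i).
Proof.
elim: r z => [|r IH] z.
  rewrite big_ord0 mulr0 /block_form big1 // => a _.
  by rewrite big1 // => b _; rewrite !big_ord0 mulmx0 mxE.
set z' := fun a => \sum_(i < r) z (lift ord0 i) a.
have zS : (fun a => \sum_(i < r.+1) z i a) =1 (fun a => z ord0 a + z' a).
  by move=> a; rewrite big_ord_recl.
rewrite (eq_block_form_vec _ zS zS).
apply: (@le_trans _ _ (2 * Q (z ord0) + 2 * Q z')).
  by rewrite -block_form_parallelogram lerDl; exact: psdX.
rewrite big_ord_recl exprS -mulrA !mulrDr; apply: lerD.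
  by rewrite ler_pM2l ?ltr0n // ler_peMl ?psdX // exprn_ege1 // ler1n.
by rewrite ler_pM2l ?ltr0n // IH.
Qed.

End PsdBound.

Section KrausSpace.
Variables (R : realType) (n : nat).
Local Notation C := R[i].
Local Notation M := 'M[C]_n.

Lemma eq_cp (F G : M -> M) :
  F =1 G -> completely_positive F -> completely_positive G.
Proof.
move=> FG cpF k X psdX v; rewrite -/(block_form _ v v).
by rewrite -(eq_block_form _ _ (fun a b => FG (X a b))); exact: cpF.
Qed.

Lemma choi_formBZ (F G : M -> M) c w :
  choi_form (fun X => F X - c *: G X) w = choi_form F w - c * choi_form G w.
Proof. by rewrite /choi_form /choi_block block_formB block_formZ. Qed.

(* With [Q] the form of a positive block and [L = 1 + sum_i |lam_i|^2],
   [Q (sum_i lam_i C_i v) <= 2^r sum_i |lam_i|^2 Q (C_i v) <= 2^r L sum_i Q (C_i v)],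
   so [q = (2^r L)^-1] works. *)
Lemma kraus_sub_alpha_cp r (Cs : 'I_r -> M) (lam : 'I_r -> C) :
  exists2 q : C, 0 < q & completely_positive
    (fun X => \sum_i alpha (Cs i) X - q *: alpha (\sum_i lam i *: Cs i) X).
Proof.
pose L : C := 1 + \sum_i `|lam i| ^+ 2.
have L0 : 0 < L by rewrite ltr_wpDr // sumr_ge0 // => i _; rewrite exprn_ge0.
have lamL i : `|lam i| ^+ 2 <= L.
  rewrite /L (bigD1 i) //= addrCA lerDl addr_ge0 // sumr_ge0 // => j _.
  by rewrite exprn_ge0.
have qpos : 0 < 2 ^+ r * L by rewrite mulr_gt0 // exprn_gt0.
exists (2 ^+ r * L)^-1; first by rewrite invr_gt0.
move=> k X psdX v; rewrite -/(block_form _ v v) block_formB block_formZ.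
rewrite block_form_sum block_form_alpha subr_ge0 ler_pdivrMl //.
under [Y in _ <= _ * Y]eq_bigr do rewrite block_form_alpha.
have Av : (fun a => (\sum_i lam i *: Cs i) *m v a) =1
          (fun a => \sum_i lam i *: (Cs i *m v a)).
  by move=> a; rewrite mulmx_suml; apply: eq_bigr => i _; rewrite scalemxAl.
rewrite (eq_block_form_vec _ Av Av).
apply: le_trans (block_form_sum_le psdX _) _; rewrite -mulrA ler_wpM2l ?exprn_ge0 //.
rewrite mulr_sumr ler_sum // => i _.
rewrite block_formZl block_formZr mulrA -normCKC ler_wpM2r //; exact: psdX.
Qed.

Lemma ann_kraus (s : seq M) (F : M -> M) w : F =1 kraus_map s ->
  {in <<s>>%VS, forall y, mxpair w y = 0} <-> choi_form F w = 0.
Proof.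
move=> FK; rewrite (eq_choi_form _ FK) choi_form_kraus.
exact: iff_trans (ann_span _ _) (iff_sym (sum_sqr_norm_eq0 _ _)).
Qed.

Lemma mem_span_kraus_cp (s : seq M) (F : M -> M) A : F =1 kraus_map s ->
  A \in <<s>>%VS <->
  exists q : C, 0 < q /\ completely_positive (fun X => F X - q *: alpha A X).
Proof.
move=> FK; split=> [As | [q [q0 cpFA]]].
  have [q q0 cp] := kraus_sub_alpha_cp (fun i : 'I_(size s) => s`_i)
                                      (coord (in_tuple s) ^~ A).
  exists q; split; first exact: q0.
  apply: eq_cp cp => X.
  by rewrite FK -(coord_span (X := in_tuple s) As) /kraus_map (big_nth 0) big_mkord.
apply/memv_ann => w /(ann_kraus _ FK) F0.
have := choi_form_ge0 w cpFA; rewrite choi_formBZ F0 choi_form_alpha sub0r.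
rewrite oppr_ge0 pmulr_rle0 // => pA; apply/eqP.
by rewrite -normr_eq0 -(sqrf_eq0 `|_|) eq_le pA exprn_ge0.
Qed.

Lemma is_kraus_map (F : M -> M) r (Cs : 'I_r -> M) :
  is_kraus F Cs -> F =1 kraus_map [seq Cs i | i <- enum 'I_r].
Proof. by move=> kF X; rewrite kraus_map_enum; exact: kF. Qed.

End KrausSpace.

Lemma theorem_conclusion_kraus (R : realType) m (F : 'M[R[i]]_m.+1 -> 'M[R[i]]_m.+1)
    r (Cs : 'I_r -> 'M[R[i]]_m.+1) :
  is_kraus F Cs -> theorem_conclusion F (fspan Cs).
Proof.
move=> kF; have same_span r' (Ds : 'I_r' -> _) : is_kraus F Ds -> fspan Ds = fspan Cs.
  move=> kD; apply: eq_vspace_ann => w.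
  exact: iff_trans (ann_kraus _ (is_kraus_map kD))
                   (iff_sym (ann_kraus _ (is_kraus_map kF))).
split=> [|r' Ds /same_span //|r' Ds /same_span -> //|A]; first by exists r, Cs.
exact: mem_span_kraus_cp (is_kraus_map kF).
Qed.

Lemma seq_cvg_to_block_form (R : realType) n k
    (Xs : nat -> 'I_k -> 'I_k -> 'M[R[i]]_n)
    (L : 'I_k -> 'I_k -> 'M[R[i]]_n) (u v : 'I_k -> 'cV[R[i]]_n) :
  (forall a b, mx_cvg_to (fun N => Xs N a b) (L a b)) ->
  seq_cvg_to (fun N => block_form (Xs N) u v) (block_form L u v).
Proof.
move=> cX; apply: seq_cvg_to_sum => a _; apply: seq_cvg_to_sum => c _.
rewrite mx_formE; apply: (@eq_seq_cvg_to _
  (fun N => \sum_b \sum_d (u a b 0)^* * Xs N a c b d * v c d 0)) => [N|].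
  by rewrite mx_formE.
apply: seq_cvg_to_sum => b _; apply: seq_cvg_to_sum => d _; rewrite mulrAC.
apply: eq_seq_cvg_to (seq_cvg_toMl _ (mx_cvg_to_entry b d (cX a c))) => N.
exact: mulrAC.
Qed.

Section KrausSeries.
Variables (R : realType) (n : nat).
Local Notation C := R[i].
Local Notation M := 'M[C]_n.
Variables (ks : nat -> seq M) (b : nat -> C) (sigma : M -> M).
Hypothesis b_gt0 : forall j, 0 < b j.

Definition kraus_series N X := \sum_(j < N) b j *: kraus_map (ks j) X.

Hypothesis sigma_lim : forall X, mx_cvg_to (kraus_series^~ X) (sigma X).

Lemma kraus_series_linear N : linear (kraus_series N).
Proof.
move=> c X Y; rewrite /kraus_series scaler_sumr -big_split.
by apply: eq_bigr => j _; rewrite kraus_map_linear scalerDr !scalerA mulrC.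
Qed.

Lemma kraus_series_cp N : completely_positive (kraus_series N).
Proof. by apply: cp_sum => j; apply: cp_scale (ltW (b_gt0 j)) (kraus_map_cp _). Qed.

Lemma sigma_linear : linear sigma.
Proof.
move=> c X Y; apply/matrixP => i j.
apply: seq_cvg_to_unique (mx_cvg_to_entry i j (sigma_lim _)) _; rewrite !mxE.
have := seq_cvg_toD (seq_cvg_toMl c (mx_cvg_to_entry i j (sigma_lim X)))
                    (mx_cvg_to_entry i j (sigma_lim Y)).
by apply: eq_seq_cvg_to => N; rewrite kraus_series_linear !mxE.
Qed.

Lemma choi_block_lim a c :
  mx_cvg_to (fun N => choi_block (kraus_series N) a c) (choi_block sigma a c).
Proof. exact: sigma_lim. Qed.

Lemma sigma_psd_choi : psd_block (choi_block sigma).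
Proof.
move=> v; have := seq_cvg_to_block_form v v choi_block_lim.
apply: (seq_cvg_to_ge0 (N0 := 0)).
move=> N _; exact: cp_psd_choi (kraus_series_cp N) v.
Qed.

Lemma choi_form_sigma_eq0 w :
  choi_form sigma w = 0 <-> forall j, {in ks j, forall K, mxpair w K = 0}.
Proof.
pose t j := \sum_(K <- ks j) `|mxpair w K| ^+ 2.
have t_ge0 j : 0 <= t j by apply: sumr_ge0 => K _; exact: exprn_ge0.
have partialE N : choi_form (kraus_series N) w = \sum_(j < N) b j * t j.
  rewrite /choi_form /choi_block /kraus_series block_form_sum.
  apply: eq_bigr => j _; rewrite block_formZ; congr (_ * _).
  exact: choi_form_kraus.
have lim : seq_cvg_to (fun N => \sum_(j < N) b j * t j) (choi_form sigma w).
  exact: eq_seq_cvg_to partialE (seq_cvg_to_block_form _ _ choi_block_lim).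
split=> [sigma0 j | ann]; last first.
  apply: seq_cvg_to_unique lim _; apply: eq_seq_cvg_to (seq_cvg_to_cst 0) => N.
  by rewrite big1 // => j _; rewrite /t (proj2 (sum_sqr_norm_eq0 _ _) (ann j)) mulr0.
apply/sum_sqr_norm_eq0/eqP; rewrite eq_le t_ge0 andbT -(pmulr_rle0 _ (b_gt0 j)).
rewrite -[X in _ <= X]sigma0; apply: (seq_cvg_to_ge (N0 := j.+1)) lim => N jN.
rewrite (bigD1 (Ordinal jN)) //= lerDl sumr_ge0 // => i _.
by rewrite mulr_ge0 // ltW.
Qed.

End KrausSeries.

Lemma theorem_conclusion_series (R : realType) m (ks : nat -> seq 'M[R[i]]_m.+1)
    (b : nat -> R[i]) (sigma : 'M[R[i]]_m.+1 -> 'M[R[i]]_m.+1)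
    (V : {vspace 'M[R[i]]_m.+1}) :
  (forall j, 0 < b j) ->
  (forall X, mx_cvg_to (kraus_series ks b ^~ X) (sigma X)) ->
  (forall w, {in V, forall y, mxpair w y = 0} <->
             forall j, {in ks j, forall K, mxpair w K = 0}) ->
  theorem_conclusion sigma V.
Proof.
move=> b_gt0 sigma_lim annV.
have kS := choi_kraus (sigma_linear sigma_lim) (sigma_psd_choi b_gt0 sigma_lim).
suff <- : fspan (choi_kraus_coef sigma) = V by exact: theorem_conclusion_kraus kS.
apply: eq_vspace_ann => w; apply: iff_trans (ann_kraus _ (is_kraus_map kS)) _.
exact: iff_trans (choi_form_sigma_eq0 b_gt0 sigma_lim w) (iff_sym (annV w)).
Qed.

Section Words.
Variables (R : realType) (m p : nat) (A : 'I_p -> 'M[R[i]]_m.+1).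
Local Notation M := 'M[R[i]]_m.+1.
Local Notation U := (<< [seq A l | l <- enum 'I_p] >>)%VS.

Fixpoint words (k : nat) : seq M :=
  if k is k'.+1 then [seq P *m A l | P <- words k', l <- enum 'I_p] else [:: 1%:M].

Lemma iter_kraus_words k X :
  iter k (fun X => \sum_(l < p) adj (A l) *m X *m A l) X = kraus_map (words k) X.
Proof.
elim: k => [|k IH] /=.
  by rewrite /kraus_map big_seq1 /alpha adjmx1 mul1mx mulmx1.
rewrite IH /kraus_map big_allpairs_dep exchange_big big_enum /=.
apply: eq_bigr => l _; rewrite mulmx_sumr mulmx_suml; apply: eq_bigr => P _.
by rewrite /alpha adjmxM !mulmxA.
Qed.

Lemma span_words k : <<words k>>%VS = (U ^+ k)%VS.
Proof.
elim: k => [|k IH]; first by rewrite expv0 span_seq1.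
rewrite expvSr -IH !span_def big_allpairs_dep big_distrl /=; apply: eq_bigr => P _.
by rewrite big_map big_distrr /=; apply: eq_bigr => l _; rewrite prodv_line.
Qed.

Lemma ann_gen_alg0 w :
  {in gen_alg0 U, forall y, mxpair w y = 0} <->
  forall k, {in words k, forall y, mxpair w y = 0}.
Proof.
split=> [ann k y yk | ann].
  by apply/ann/(subvP (subX_agenv U k)); rewrite -span_words memv_span.
by apply: ann_sumv => k _; rewrite -span_words; exact/ann_span/ann.
Qed.

Lemma ann_gen_alg1 w :
  {in gen_alg1 U, forall y, mxpair w y = 0} <->
  forall k, {in words k.+1, forall y, mxpair w y = 0}.
Proof.
split=> [ann k y yk | ann]; last first.
  by apply: ann_sumv => k _; rewrite -span_words; exact/ann_span/ann.
have gen1E : gen_alg1 U = (agenv U * U)%VS.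
  by rewrite /gen_alg1 /agenv big_distrl /=; apply: eq_bigr => i _; rewrite expvSr.
apply: ann; rewrite gen1E; apply: (subvP (prodvSl U (subX_agenv U k))).
by rewrite -expvSr -span_words memv_span.
Qed.

End Words.

Theorem theorem5p1 (R : realType) (m p : nat) (hp : (0 < p)%N)
  (A : 'I_p -> 'M[R[i]]_m.+1) (a : nat -> R[i])
  (sigma0 sigma1 : 'M[R[i]]_m.+1 -> 'M[R[i]]_m.+1) :
  let tau := fun X : 'M[R[i]]_m.+1 => \sum_(l < p) adj (A l) *m X *m A l in
  (forall n, 0 < a n) ->
  (* sum_n a_n tau^n converges in norm (operators represented as matrices) *)
  (exists L, mx_cvg_to
     (fun N => \sum_(n < N) a n *: lin_mx (iter n tau)) L) ->
  (forall X, mx_cvg_to (fun N => \sum_(n < N) a n *: iter n tau X) (sigma0 X)) ->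
  (forall X, mx_cvg_to (fun N => \sum_(1 <= n < N) a n *: iter n tau X)
                       (sigma1 X)) ->
  let U := (<< [seq A l | l <- enum 'I_p] >>)%VS in
  theorem_conclusion sigma0 (gen_alg0 U) /\
  theorem_conclusion sigma1 (gen_alg1 U).
Proof.
move=> tau a_gt0 _ sigma0_lim sigma1_lim U.
have tauE k X : iter k tau X = kraus_map (words A k) X := iter_kraus_words A k X.
split.
  apply: (theorem_conclusion_series (ks := words A) a_gt0) => [X|w].
    by apply: eq_mx_cvg_to (sigma0_lim X) => N; apply: eq_bigr => j _; rewrite tauE.
  exact: ann_gen_alg0.
apply: (theorem_conclusion_series (ks := fun k => words A k.+1)
                                  (b := fun k => a k.+1)) => [//|X|w].
  apply: eq_mx_cvg_to (mx_cvg_to_shift (sigma1_lim X)) => N.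
  by rewrite big_add1 big_mkord; apply: eq_bigr => j _; rewrite tauE.
exact: ann_gen_alg1.
Qed.
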